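(* Let $D$ be a pv-monoid (idempotent, with symmetric valuation function), $P$ a nonempty finite set of ports, $I,J$ nonempty finite index sets and $m_i$ ($i\in I$), $m'_j$ ($j\in J$) full monomials over $P$. Then \[\Big(\sum_{i\in I}m_i\Big)\uplus\Big(\sum_{j\in J}m'_j\Big)\equiv\begin{cases}\sum_{i\in I}m_i+\sum_{j\in J}m'_j&\text{if } m_i\not\equiv m'_j\text{ for every } i\in I,\ j\in J,\\ 0&\text{otherwise.}\end{cases}\]
   Context: A pv-monoid $(D,\oplus,\mathrm{val},\otimes,0,1)$ consists of a commutative monoid $(D,\oplus,0)$, a map $\mathrm{val}$ from nonempty finite sequences over $D$ to $D$ with $\mathrm{val}(d)=d$ and $\mathrm{val}(d_1,\dots,d_n)=0$ whenever some $d_i=0$, a binary operation $\otimes$ and an element $1$ with $\mathrm{val}(1,\dots,1)=1$, $0\otimes d=d\otimes0=0$, $1\otimes d=d\otimes1=d$. Standing assumption: $D$ is idempotent and $\mathrm{val}$ is symmetric. An empty $\oplus$-sum is $0$. $I(P)$ is the set of nonempty subsets of $P$, $C(P)$ the set of nonempty subsets of $I(P)$. PIL formulas: $\phi::=true\mid p\mid\overline{\phi}\mid\phi\vee\phi$ ($p\in P$), $\alpha\models_i p$ iff $p\in\alpha$, negation and disjunction as usual, $\wedge$ via De Morgan. A full monomial is a PIL formula $\bigwedge_{p\in P_+}p\wedge\bigwedge_{p\in P_-}\overline p$ with $P_+\cup P_-=P$, $P_+\cap P_-=\emptyset$. PCL formulas: $f::=true\mid\phi\mid\neg f\mid f\sqcup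 f\mid f+f$; $\gamma\models\phi$ iff every $\alpha\in\gamma$ satisfies $\phi$; $\neg,\sqcup$ are complement and union; $\gamma\models f_1+f_2$ iff $\gamma=\gamma_1\cup\gamma_2$ with $\gamma_1,\gamma_2\in C(P)$, $\gamma_1\models f_1,\gamma_2\models f_2$. $\sum$ is $+$-combination. Weighted formulas: constants $d\in D$, PCL formulas, $\oplus,\otimes,\uplus$ and $*$; semantics $\|\cdot\|:C(P)\to D$ with $\|d\|(\gamma)=d$, $\|f\|(\gamma)=1$ if $\gamma\models f$ and $0$ otherwise, $\oplus,\otimes$ pointwise, $\|\zeta_1\uplus\zeta_2\|(\gamma)=\bigoplus(\|\zeta_1\|(\gamma_1)\otimes\|\zeta_2\|(\gamma_2))$ over disjoint $\gamma_1,\gamma_2\in C(P)$ with union $\gamma$. $\equiv$ means equality of semantics on all of $C(P)$. *)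

From HB Require Import structures.
From mathcomp Require Import all_boot.
From Stdlib Require List Permutation.
Set Implicit Arguments. Unset Strict Implicit. Unset Printing Implicit Defensive.

Record pvMonoid := PvMonoid {
  pv_car :> Type;
  pv_add : pv_car -> pv_car -> pv_car;
  pv_val : seq pv_car -> pv_car;          (* only meaningful on nonempty sequences *)
  pv_mul : pv_car -> pv_car -> pv_car;
  pv_zero : pv_car;
  pv_one : pv_car;
  pv_addA : forall a b c, pv_add a (pv_add b c) = pv_add (pv_add a b) c;
  pv_addC : forall a b, pv_add a b = pv_add b a;
  pv_add0d : forall a, pv_add pv_zero a = a;
  pv_val1 : forall d, pv_val [:: d] = d;
  pv_val0 : forall s, s <> [::] -> List.In pv_zero s -> pv_val s = pv_zero;
  pv_val_one : forall n, pv_val (nseq n.+1 pv_one) = pv_one;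
  pv_mul0d : forall d, pv_mul pv_zero d = pv_zero;
  pv_muld0 : forall d, pv_mul d pv_zero = pv_zero;
  pv_mul1d : forall d, pv_mul pv_one d = d;
  pv_muld1 : forall d, pv_mul d pv_one = d;
  pv_idem : forall d, pv_add d d = d;
  pv_val_sym : forall s t, s <> [::] -> Permutation.Permutation s t -> pv_val s = pv_val t
}.

Section Formulas.
Variable P : finType.

(* interactions I(P): nonempty subsets of P; C(P): nonempty sets of interactions *)
Definition isI (a : {set P}) : bool := a != set0.
Definition isC (g : {set {set P}}) : bool := (g != set0) && [forall a in g, isI a].

Inductive pil : Type :=
| PTrue : pil
| PVar : P -> pil
| PNeg : pil -> pil
| POr : pil -> pil -> pil.

Fixpoint sat_i (a : {set P}) (phi : pil) : bool :=
  match phi with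
  | PTrue => true
  | PVar p => p \in a
  | PNeg f => ~~ sat_i a f
  | POr f1 f2 => sat_i a f1 || sat_i a f2
  end.

Definition PAnd (f1 f2 : pil) : pil := PNeg (POr (PNeg f1) (PNeg f2)).

(* full monomial with positive part Pp (negative part = complement of Pp):
   /\_{p in P} (p if p \in Pp, ~p otherwise) *)
Definition full_monomial (Pp : {set P}) : pil :=
  foldr (fun p acc => PAnd (if p \in Pp then PVar p else PNeg (PVar p)) acc)
        PTrue (enum P).

Inductive pcl : Type :=
| FTrue : pcl
| FPil : pil -> pcl
| FNeg : pcl -> pcl
| FUnion : pcl -> pcl -> pcl
| FPlus : pcl -> pcl -> pcl.

Fixpoint sat (g : {set {set P}}) (f : pcl) : bool :=
  match f with
  | FTrue => true
  | FPil phi => [forall a in g, sat_i a phi]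
  | FNeg f1 => ~~ sat g f1
  | FUnion f1 f2 => sat g f1 || sat g f2
  | FPlus f1 f2 =>
      [exists g1 : {set {set P}}, exists g2 : {set {set P}},
         [&& isC g1, isC g2, g == g1 :|: g2, sat g1 f1 & sat g2 f2]]
  end.

Definition pcl_sum (s : seq pcl) : pcl :=
  match s with
  | [::] => FTrue (* unused: sums are over nonempty index sets *)
  | x :: s' => foldl FPlus x s'
  end.

Variable D : pvMonoid.

Inductive wpcl : Type :=
| WConst : D -> wpcl
| WPcl : pcl -> wpcl
| WOplus : wpcl -> wpcl -> wpcl
| WOtimes : wpcl -> wpcl -> wpcl
| WUplus : wpcl -> wpcl -> wpcl.

Fixpoint wsem (z : wpcl) (g : {set {set P}}) : D :=
  match z with
  | WConst d => d
  | WPcl f => if sat g f then pv_one D else pv_zero D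
  | WOplus z1 z2 => pv_add (wsem z1 g) (wsem z2 g)
  | WOtimes z1 z2 => pv_mul (wsem z1 g) (wsem z2 g)
  | WUplus z1 z2 =>
      \big[@pv_add D / pv_zero D]_(p : {set {set P}} * {set {set P}} |
           [&& isC p.1, isC p.2, [disjoint p.1 & p.2] & p.1 :|: p.2 == g])
         pv_mul (wsem z1 p.1) (wsem z2 p.2)
  end.

Definition wequiv (z1 z2 : wpcl) : Prop :=
  forall g : {set {set P}}, isC g -> wsem z1 g = wsem z2 g.

End Formulas.

From HB Require Import structures.
From mathcomp Require Import all_boot.

Set Implicit Arguments.
Unset Strict Implicit.
Unset Printing Implicit Defensive.

(* A full monomial [m] is satisfied by [g] in C(P) exactly when [g = {m}], and
   a [+]-sum of formulas satisfied only by [S1] and only by [S2] is satisfied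
   only by [S1 :|: S2]; so the sum of the [m i] is satisfied only by
   [{m i | i in I}]. The semantics of [⊎] is a sum over disjoint splittings of
   [g] of 0/1 values, which in an idempotent monoid is 1 exactly when some
   splitting works, i.e. when [{m i}] and [{m' j}] are disjoint and cover [g].
   If [m i] and [m' j] are equivalent then, unless [1 = 0] in [D], they are
   equal, so these two sets are never disjoint. *)

Section BooleanWeights.
Variable D : pvMonoid.

Definition pv_of_bool (b : bool) : D := if b then pv_one D else pv_zero D.

Lemma pv_add_bool (a b : bool) :
  pv_add (pv_of_bool a) (pv_of_bool b) = pv_of_bool (a || b).
Proof. by case: a; case: b; rewrite /= ?pv_idem ?pv_add0d // pv_addC pv_add0d. Qed.

Lemma pv_mul_bool (a b : bool) :
  pv_mul (pv_of_bool a) (pv_of_bool b) = pv_of_bool (a && b).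
Proof. by case: a; case: b; rewrite /= ?pv_mul1d ?pv_mul0d. Qed.

Lemma big_pv_of_bool (T : Type) (r : seq T) (Pr B : pred T) :
  \big[@pv_add D/pv_zero D]_(x <- r | Pr x) pv_of_bool (B x)
  = pv_of_bool (has (fun x => Pr x && B x) r).
Proof.
elim: r => [|x r IH]; rewrite ?big_nil ?big_cons //=.
by rewrite IH; case: (Pr x); rewrite // pv_add_bool.
Qed.

Lemma bigfin_pv_of_bool (T : finType) (Pr B : pred T) :
  \big[@pv_add D/pv_zero D]_(x | Pr x) pv_of_bool (B x)
  = pv_of_bool [exists x, Pr x && B x].
Proof.
rewrite big_pv_of_bool; congr pv_of_bool.
by apply/hasP/existsP => [[x _ Bx] | [x Bx]]; exists x; rewrite ?mem_index_enum.
Qed.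

End BooleanWeights.

Section PointFormulas.
Variable P : finType.
Implicit Types (a Pp : {set P}) (g S : {set {set P}}) (f : pcl P).

Lemma isC_sub g S : isC g -> S \subset g -> S != set0 -> isC S.
Proof.
case/andP=> _ /forall_inP gI /subsetP Sg S0; rewrite /isC S0.
by apply/forall_inP => a /Sg; apply: gI.
Qed.

Lemma isC1 a : a != set0 -> isC [set a].
Proof.
move=> a0; apply/andP; split; first by apply/set0Pn; exists a; rewrite set11.
by apply/forall_inP => b /set1P ->.
Qed.

Definition pcl_defines f S := forall g, isC g -> sat g f = (g == S).

Lemma sat_i_full_monomial a Pp : sat_i a (full_monomial Pp) = (a == Pp).
Proof.
have -> : sat_i a (full_monomial Pp) = all (fun p => (p \in a) == (p \in Pp)) (enum P).
  rewrite /full_monomial; elim: (enum P) => [|p r IH] //=.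
  by rewrite IH negb_or !negbK; case: (p \in Pp) => /=; case: (p \in a).
apply/allP/eqP => [H|-> p _]; last exact: eqxx.
by apply/setP => p; apply/eqP/H; rewrite mem_enum.
Qed.

Lemma full_monomial_defines Pp : pcl_defines (FPil (full_monomial Pp)) [set Pp].
Proof.
move=> g /andP [g0 _] /=.
have -> : [forall a in g, sat_i a (full_monomial Pp)] = (g \subset [set Pp]).
  apply/forall_inP/subsetP => H a /H; by rewrite sat_i_full_monomial inE.
by rewrite subset1 (negPf g0) orbF.
Qed.

Lemma plus_defines f1 f2 S1 S2 :
  pcl_defines f1 S1 -> pcl_defines f2 S2 -> S1 != set0 -> S2 != set0 ->
  pcl_defines (FPlus f1 f2) (S1 :|: S2).
Proof.
move=> def1 def2 S10 S20 g Cg /=; apply/existsP/eqP.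
- case=> g1 /existsP [g2 /and5P [C1 C2 /eqP -> sat1 sat2]].
  by rewrite def1 // in sat1; rewrite def2 // in sat2; rewrite (eqP sat1) (eqP sat2).
- move=> eg; exists S1; apply/existsP; exists S2.
  have C1 : isC S1 by apply: isC_sub Cg _ S10; rewrite eg subsetUl.
  have C2 : isC S2 by apply: isC_sub Cg _ S20; rewrite eg subsetUr.
  by rewrite C1 C2 eg def1 // def2 // !eqxx.
Qed.

Lemma sum_full_monomials_defines (s : seq {set P}) : s != [::] ->
  pcl_defines (pcl_sum [seq FPil (full_monomial x) | x <- s]) [set:: s].
Proof.
case: s => [//|x0 s _]; elim/last_ind: s => [|s y IH].
  by rewrite set_seq1; apply: full_monomial_defines.
rewrite -rcons_cons map_rcons /= foldl_rcons.
have -> : [set:: rcons (x0 :: s) y] = [set:: x0 :: s] :|: [set y].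
  by apply/setP => x; rewrite in_setU in_set1 !in_set mem_rcons in_cons orbC.
apply: plus_defines IH (full_monomial_defines y) _ _.
- by apply/set0Pn; exists x0; rewrite inE mem_head.
- by apply/set0Pn; exists y; rewrite set11.
Qed.

Lemma indexed_sum_defines (T : finType) (m : T -> {set P}) : 0 < #|T| ->
  pcl_defines (pcl_sum [seq FPil (full_monomial (m i)) | i <- enum T]) (m @: setT).
Proof.
move=> T0; rewrite (map_comp (fun x => FPil (full_monomial x)) m).
have -> : m @: setT = [set:: map m (enum T)].
  apply/setP => x; rewrite inE; apply/imsetP/mapP => [[i _ ->]|[i _ ->]];
    by exists i; rewrite ?mem_enum ?inE.
by apply: sum_full_monomials_defines; rewrite -size_eq0 size_map -cardE -lt0n.
Qed.

Lemma wsem_uplus_defines (D : pvMonoid) f1 f2 S1 S2 g :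
  pcl_defines f1 S1 -> pcl_defines f2 S2 -> S1 != set0 -> S2 != set0 -> isC g ->
  wsem (WUplus (WPcl D f1) (WPcl D f2)) g
  = pv_of_bool D ([disjoint S1 & S2] && (g == S1 :|: S2)).
Proof.
move=> def1 def2 S10 S20 Cg /=.
under eq_bigr => p /and4P [C1 C2 _ _] do
  rewrite (pv_mul_bool D (sat p.1 f1) (sat p.2 f2)) def1 // def2 //.
rewrite bigfin_pv_of_bool; congr pv_of_bool; apply/existsP/andP.
- case=> -[g1 g2] /= /and3P [/and4P [_ _ dis /eqP eg] /eqP e1 /eqP e2].
  by rewrite -e1 -e2 eg eqxx.
- case=> dis /eqP eg; exists (S1, S2); rewrite /= dis eg !eqxx !andbT.
  by rewrite (isC_sub Cg _ S10) ?(isC_sub Cg _ S20) ?eg ?subsetUl ?subsetUr.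
Qed.

Lemma wequiv_full_monomial (D : pvMonoid) a b :
  wequiv (WPcl D (FPil (full_monomial a))) (WPcl D (FPil (full_monomial b))) ->
  a != set0 -> a = b \/ pv_one D = pv_zero D.
Proof.
move=> eqab a0; move: (eqab _ (isC1 a0)); cbn [wsem].
rewrite !full_monomial_defines ?isC1 // eqxx.
by case: eqP => [/set1_inj|_]; [left | right].
Qed.

End PointFormulas.

Theorem mainTheorem14 (D : pvMonoid) (P I J : finType)
  (hP : 0 < #|P|) (hI : 0 < #|I|) (hJ : 0 < #|J|)
  (m : I -> {set P}) (m' : J -> {set P}) :
  let mi i := WPcl D (FPil (full_monomial (m i))) in
  let mj j := WPcl D (FPil (full_monomial (m' j))) in
  let sI := pcl_sum [seq FPil (full_monomial (m i)) | i <- enum I] in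
  let sJ := pcl_sum [seq FPil (full_monomial (m' j)) | j <- enum J] in
  ((forall i j, ~ wequiv (mi i) (mj j)) ->
     wequiv (WUplus (WPcl D sI) (WPcl D sJ)) (WPcl D (FPlus sI sJ)))
  /\
  ((exists i j, wequiv (mi i) (mj j)) ->
     wequiv (WUplus (WPcl D sI) (WPcl D sJ)) (WConst P (pv_zero D))).
Proof.
move=> mi mj sI sJ.
have defI := indexed_sum_defines m hI; have defJ := indexed_sum_defines m' hJ.
have SI0 : m @: setT != set0 by rewrite imset_eq0 -card_gt0 cardsT.
have SJ0 : m' @: setT != set0 by rewrite imset_eq0 -card_gt0 cardsT.
split=> [neq_ij | [i [j eq_ij]]] g Cg; rewrite (wsem_uplus_defines D defI defJ) //.
- have dis : [disjoint m @: setT & m' @: setT].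
    rewrite -setI_eq0; apply/eqP/setP => x; rewrite !inE.
    apply/negbTE/andP => [[/imsetP [i _ ->] /imsetP [j _ eij]]].
    by apply: (neq_ij i j); rewrite /mi /mj eij.
  by cbn [wsem]; rewrite dis (plus_defines defI defJ SI0 SJ0 Cg).
- case: andP => [[dis /eqP eg]|//]; rewrite /=.
  have SIi : m i \in m @: setT by rewrite imset_f ?inE.
  have mi0 : m i != set0.
    by case/andP: Cg => _ /forall_inP; apply; rewrite eg inE SIi.
  case: (wequiv_full_monomial eq_ij mi0) => // eij.
  by move: (disjointFr dis SIi); rewrite eij imset_f ?inE.
Qed.
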